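(* Let $c \ge 1$, let $\{(x_i,y_i)\}_{i=1}^n$ be a data set with $x_i \in \mathbb{R}^m$ and each $y_i \in \{e_1,\dots,e_c\}\subset\mathbb{R}^c$ a one-hot vector. Fix a tree structure, i.e. a finite family of leaves $\ell$ with membership functions $\mu_\ell:\mathbb{R}^m\to\{0,1\}$ such that each $x_i$ has $\mu_\ell(x_i)=1$ for exactly one leaf $\ell$. Let $\mathcal{L}:\mathbb{R}^c\times\mathbb{R}^c\to\mathbb{R}$ be a loss function such that for every leaf $\ell$ containing at least one data point, the weighted mean $v_\ell=\sum_{i=1}^n \mu_\ell(x_i)y_i\big/\sum_{i=1}^n\mu_\ell(x_i)$ minimizes $v\mapsto \sum_{i=1}^n \mu_\ell(x_i)\mathcal{L}(y_i,v)$ over $v\in\mathbb{R}^c$. Let $T\in[0,1]^{c\times c}$ be an invertible noise transition matrix and define the forward-corrected loss $\mathcal{L}_T(y,\hat y)=\mathcal{L}(y,T\hat y)$. Then for each such leaf $\ell$, $T^{-1}v_\ell$ minimizes $v\mapsto\sum_{i=1}^n\mu_\ell(x_i)\mathcal{L}_T(y_i,v)$, and the minimal total loss of the tree structure is unchanged by forward correction: $$\sum_\ell \min_{v\in\mathbb{R}^c}\sum_{i=1}^n \mu_\ell(x_i)\mathcal{L}_T(y_i,v)=\sum_\ell \min_{v\in\mathbb{R}^c}\sum_{i=1}^n \mu_\ell(x_i)\mathcal{L}(y_i,v).$$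
   Context: Here $e_k\in\mathbb{R}^c$ denotes the standard basis (one-hot) vector with a $1$ in coordinate $k$. A decision tree with a fixed structure predicts for $x$ the value $v_\ell$ of the unique leaf $\ell$ with $\mu_\ell(x)=1$; the total loss of the tree is $\sum_\ell\sum_{i=1}^n\mu_\ell(x_i)\mathcal{L}(y_i,v_\ell)$. The transition matrix has entries $T_{a,b}=P(\tilde Y=b\mid Y=a)$, relating true labels $Y$ to observed noisy labels $\tilde Y$. *)

From mathcomp Require Import all_boot all_order all_algebra.
Set Implicit Arguments. Unset Strict Implicit. Unset Printing Implicit Defensive.
Import Order.TTheory GRing.Theory Num.Theory.
Local Open Scope ring_scope.

Definition is_minimizer (R : realFieldType) (V : Type) (f : V -> R) (v : V) : Prop :=
  forall w, f v <= f w.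

Definition is_min (R : realFieldType) (V : Type) (f : V -> R) (m : R) : Prop :=
  (exists v, f v = m) /\ (forall w, m <= f w).

Definition onehot (R : realFieldType) (c : nat) (k : 'I_c) : 'cV[R]_c :=
  delta_mx k 0.

Definition leaf_loss (R : realFieldType) (n m c : nat) (Lf : finType)
  (mu : Lf -> 'cV[R]_m -> bool) (x : 'I_n -> 'cV[R]_m) (y : 'I_n -> 'cV[R]_c)
  (Lo : 'cV[R]_c -> 'cV[R]_c -> R) (l : Lf) (v : 'cV[R]_c) : R :=
  \sum_(i < n) (mu l (x i))%:R * Lo (y i) v.

Definition leaf_mean (R : realFieldType) (n m c : nat) (Lf : finType)
  (mu : Lf -> 'cV[R]_m -> bool) (x : 'I_n -> 'cV[R]_m) (y : 'I_n -> 'cV[R]_c)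
  (l : Lf) : 'cV[R]_c :=
  (\sum_(i < n) ((mu l (x i))%:R : R))^-1 *: \sum_(i < n) (mu l (x i))%:R *: y i.

Definition fwd_loss (R : realFieldType) (c : nat) (T : 'M[R]_c)
  (Lo : 'cV[R]_c -> 'cV[R]_c -> R) (y yh : 'cV[R]_c) : R :=
  Lo y (T *m yh).

(* Multiplication by the invertible matrix T is a bijection of R^c, and the
   forward-corrected leaf objective is the original one precomposed with it.
   Hence minimizers are carried back by T^-1 and the minimal values, leaf by
   leaf, are unchanged.  Leaves without data points have the zero objective,
   which every vector minimizes, so the leaf means minimize every leaf. *)

From mathcomp Require Import all_boot all_order all_algebra.
Set Implicit Arguments. Unset Strict Implicit. Unset Printing Implicit Defensive.
Import Order.TTheory GRing.Theory Num.Theory.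
Local Open Scope ring_scope.

Section Minimizers.

Variables (R : realFieldType) (V W : Type).
Implicit Types (f : V -> R) (g : W -> V).

Lemma is_minimizer_is_min f v : is_minimizer f v -> is_min f (f v).
Proof. by move=> fv; split; first exists v. Qed.

Lemma is_minimizer_comp f g w :
  is_minimizer f (g w) -> is_minimizer (f \o g) w.
Proof. by move=> fgw w'; apply: fgw. Qed.

Lemma is_min_comp_surj f g a :
  (forall v, exists w, g w = v) -> is_min f a -> is_min (f \o g) a.
Proof.
move=> g_surj [[v <-] fv_le]; split => [|w]; last exact: fv_le.
by have [w gw] := g_surj v; exists w; rewrite /= gw.
Qed.

End Minimizers.

Section LeafLoss.

Variables (R : realFieldType) (n m c : nat) (Lf : finType).
Variables (mu : Lf -> 'cV[R]_m -> bool) (x : 'I_n -> 'cV[R]_m) (y : 'I_n -> 'cV[R]_c).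

Lemma leaf_loss_fwd (Lo : 'cV[R]_c -> 'cV[R]_c -> R) (T : 'M[R]_c) l :
  leaf_loss mu x y (fwd_loss T Lo) l = leaf_loss mu x y Lo l \o mulmx T.
Proof. by []. Qed.

Lemma leaf_loss_empty (Lo : 'cV[R]_c -> 'cV[R]_c -> R) l v :
  ~~ [exists i, mu l (x i)] -> leaf_loss mu x y Lo l v = 0.
Proof.
move/existsPn=> l_empty; rewrite /leaf_loss big1 // => i _.
by rewrite (negbTE (l_empty i)) mul0r.
Qed.

Lemma leaf_mean_minimizer (Lo : 'cV[R]_c -> 'cV[R]_c -> R) :
  (forall l, (exists i, mu l (x i)) ->
     is_minimizer (leaf_loss mu x y Lo l) (leaf_mean mu x y l)) ->
  forall l, is_minimizer (leaf_loss mu x y Lo l) (leaf_mean mu x y l).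
Proof.
move=> mean_min l; have [/existsP l_nonempty|l_empty] := boolP [exists i, mu l (x i)].
  exact: mean_min.
by move=> w; rewrite !leaf_loss_empty.
Qed.

End LeafLoss.

Theorem theorem1 (R : realFieldType) (c n m : nat) (Lf : finType)
  (x : 'I_n -> 'cV[R]_m) (y : 'I_n -> 'cV[R]_c)
  (mu : Lf -> 'cV[R]_m -> bool)
  (Lo : 'cV[R]_c -> 'cV[R]_c -> R) (T : 'M[R]_c) :
  (0 < c)%N ->
  (forall i, exists k : 'I_c, y i = onehot R k) ->
  (forall i, exists! l : Lf, mu l (x i)) ->
  (forall l, (exists i, mu l (x i)) ->
     is_minimizer (leaf_loss mu x y Lo l) (leaf_mean mu x y l)) ->
  (forall a b, 0 <= T a b <= 1) ->
  T \in unitmx ->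
  (forall l, (exists i, mu l (x i)) ->
     is_minimizer (leaf_loss mu x y (fwd_loss T Lo) l) (invmx T *m leaf_mean mu x y l))
  /\
  (exists mT m0 : Lf -> R,
     (forall l, is_min (leaf_loss mu x y (fwd_loss T Lo) l) (mT l)) /\
     (forall l, is_min (leaf_loss mu x y Lo l) (m0 l)) /\
     \sum_(l : Lf) mT l = \sum_(l : Lf) m0 l).
Proof.
move=> _ _ _ /leaf_mean_minimizer mean_min _ T_unit.
have T_surj (v : 'cV[R]_c) : exists w, T *m w = v.
  by exists (invmx T *m v); rewrite mulKVmx.
split=> [l _|].
  by rewrite leaf_loss_fwd; apply: is_minimizer_comp; rewrite mulKVmx //; apply: mean_min.
pose m0 l := leaf_loss mu x y Lo l (leaf_mean mu x y l).
exists m0, m0; split=> [l|]; last by split=> // l; apply: is_minimizer_is_min.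
by rewrite leaf_loss_fwd; apply: is_min_comp_surj T_surj _; apply: is_minimizer_is_min.
Qed.
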